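(* A reflexive Banach space $X$ has the $\mathbf{L}_{p,p}$-nu if and only if $X^*$ has the $\mathbf{L}_{p,p}$-nu.
   Context: For a Banach space $X$ over $\mathbb{K}\in\{\mathbb{R},\mathbb{C}\}$: $\Pi(X)=\{(x,x^* )\in S_X\times S_{X^*}: x^*(x)=1\}$; for $T\in\mathcal{L}(X)$ (bounded linear operators on $X$), $v(T)=\sup\{|x^*(Tx)|:(x,x^* )\in\Pi(X)\}$. $X$ has the $\mathbf{L}_{p,p}$-nu if for every $\varepsilon>0$ and $(x,x^* )\in\Pi(X)$ there is $\eta(\varepsilon,(x,x^* ))>0$ such that whenever $T\in\mathcal{L}(X)$ with $v(T)=1$ satisfies $|x^*(Tx)|>1-\eta(\varepsilon,(x,x^* ))$, there is $S\in\mathcal{L}(X)$ with $v(S)=1$, $|x^*(Sx)|=1$ and $\|S-T\|<\varepsilon$. *)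

From HB Require Import structures.
From mathcomp Require Import all_boot all_order all_algebra.
From mathcomp Require Import all_classical all_reals all_analysis.
From mathcomp Require Export complex.

Set Implicit Arguments.
Unset Strict Implicit.
Unset Printing Implicit Defensive.

Import Order.TTheory GRing.Theory Num.Theory.
Import numFieldNormedType.Exports.
Local Open Scope classical_set_scope.
Local Open Scope ring_scope.

(** The supremum (least upper bound) of a set of scalars, when it exists
    (for K = R or K = C and a nonempty bounded set of reals it always does;
    the order on C is the usual partial order of MathComp). *)
Definition supK {K : numFieldType} (A : set K) : K := xget 0 (supremums A).

(** A normed space presented as a linear subspace [D] of a K-vector space [V]
    together with a norm [N] on it.  A Banach space X is presented as
    (X, setT, normr); its dual X^* as (X -> K, bounded linear functionals,
    dual norm). *)
Section GenericNormedSpace.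
Variables (K : numFieldType) (V : lmodType K) (D : set V) (N : V -> K).

Definition unit_ball : set V := [set v | D v /\ N v <= 1].

Definition bd_functional (phi : V -> K) : Prop :=
  (forall (a : K) (u v : V), D u -> D v -> phi (a *: u + v) = a * phi u + phi v)
  /\ exists C : K, forall v, D v -> `|phi v| <= C * N v.

Definition fnorm (phi : V -> K) : K := supK [set `|phi v| | v in unit_ball].

Definition bd_operator (T : V -> V) : Prop :=
  (forall v, D v -> D (T v))
  /\ (forall (a : K) (u v : V), D u -> D v -> T (a *: u + v) = a *: T u + T v)
  /\ exists C : K, forall v, D v -> N (T v) <= C * N v.

Definition opnorm (T : V -> V) : K := supK [set N (T v) | v in unit_ball].

Definition Pi : set (V * (V -> K)) :=
  [set p | D p.1 /\ N p.1 = 1 /\ bd_functional p.2 /\ fnorm p.2 = 1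
           /\ p.2 p.1 = 1].

Definition numrad (T : V -> V) : K := supK [set `|p.2 (T p.1)| | p in Pi].

Definition Lpp_nu : Prop :=
  forall eps : K, 0 < eps -> forall p, Pi p ->
  exists2 eta : K, 0 < eta &
    forall T, bd_operator T -> numrad T = 1 -> 1 - eta < `|p.2 (T p.1)| ->
    exists S, [/\ bd_operator S, numrad S = 1, `|p.2 (S p.1)| = 1
                & opnorm (fun v => S v - T v) < eps].

End GenericNormedSpace.

Section Concrete.
Variable K : numFieldType.

Definition dual_set (X : normedModType K) : set (X -> K^o) :=
  fun f => bd_functional (V := X) setT (fun x : X => `|x|) f.

Definition dual_norm (X : normedModType K) (f : X -> K^o) : K :=
  fnorm (V := X) setT (fun x : X => `|x|) f.

Definition has_Lpp_nu (X : normedModType K) : Prop :=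
  Lpp_nu (V := X) setT (fun x : X => `|x|).

Definition dual_has_Lpp_nu (X : normedModType K) : Prop :=
  Lpp_nu (V := X -> K^o) (@dual_set X) (@dual_norm X).

(** X is reflexive: the canonical embedding X -> X^** is onto, i.e. every
    bounded linear functional on X^* is evaluation at some x in X. *)
Definition reflexive_space (X : normedModType K) : Prop :=
  forall Phi : (X -> K^o) -> K,
    bd_functional (@dual_set X) (@dual_norm X) Phi ->
    exists x : X, forall f, dual_set f -> Phi f = f x.

End Concrete.

From HB Require Import structures.
From mathcomp Require Import all_boot all_order all_algebra.
From mathcomp Require Import all_classical all_reals all_analysis.
From mathcomp Require Import complex.
From mathcomp Require Import ring lra.

(** The proof transports everything along the adjoint T |-> T^*, where
    T^* g = g o T.  Assuming only that suprema of bounded nonnegative sets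
    behave (true over R and C) and that X has enough norming functionals
    (Hahn-Banach), we show:
    - (x, f) is in Pi(X) iff (f, ev_x) is in Pi(X^* ), and by reflexivity
      every element of Pi(X^* ) has this form;
    - T^* is bounded with v(T^* ) = v(T) and ||T^*|| = ||T||, and by
      reflexivity every bounded operator on X^* is an adjoint T^*.
    The L_{p,p}-nu condition then translates verbatim in both directions
    (the same eta works). *)

Set Implicit Arguments.
Unset Strict Implicit.
Unset Printing Implicit Defensive.
Import Order.TTheory GRing.Theory Num.Theory.
Import numFieldNormedType.Exports.
Local Open Scope classical_set_scope.
Local Open Scope ring_scope.

Definition supK_correct (K : numFieldType) : Prop :=
  forall A : set K, (exists a, A a) -> (forall a, A a -> 0 <= a) ->
  (exists M, forall a, A a -> a <= M) -> supremums A (supK A).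

Lemma supK_correct_real (R : realType) : supK_correct R.
Proof.
move=> A [a Aa] A0 [M AM].
rewrite /supK; apply: xgetPex; exists (sup A).
have hs : has_sup A by split; [exists a | exists M].
split; first exact: sup_upper_bound.
by move=> y yub; apply: ge_sup => //; exists a.
Qed.

Lemma ge0_realC (R : rcfType) (z : R[i]) : 0 <= z -> z = (complex.Re z)%:C%C.
Proof. by case: z => a b; rewrite lecE /= => /andP[/eqP -> _]. Qed.

(** Over C a nonnegative set consists of reals, so its supremum is the real
    supremum of the real parts. *)
Lemma supK_correct_complex (R : realType) : supK_correct R[i].
Proof.
move=> A [a Aa] A0 [M AM].
rewrite /supK; apply: xgetPex.
pose B := [set complex.Re z | z in A].
have hs : has_sup B.
  split; first by exists (complex.Re a); exists a.
  exists (complex.Re M) => _ [z Az <-]; have := AM z Az; by rewrite lecE => /andP[].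
have AR z : A z -> z = (complex.Re z)%:C%C by move=> Az; exact/ge0_realC/A0.
exists ((sup B)%:C%C); split.
  move=> z Az; rewrite (AR z Az) lecR; apply: sup_upper_bound => //; by exists z.
move=> y yub.
have yIm : complex.Im y = 0.
  by have := yub a Aa; rewrite (AR a Aa) lecE /= => /andP[/eqP -> _].
rewrite lecE /= yIm eqxx /=; apply: ge_sup; first by exists (complex.Re a); exists a.
move=> _ [z Az <-]; have := yub z Az; by rewrite lecE => /andP[].
Qed.

Section SupK.
Variable K : numFieldType.

Lemma supK_max (A : set K) s : A s -> (forall a, A a -> a <= s) -> supK A = s.
Proof.
move=> As ub; rewrite /supK; apply: xget_subset1; last exact: is_subset1_supremums.
by split => // y yub; exact: yub.
Qed.

Hypothesis supKP : supK_correct K.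

Lemma supK_ub (A : set K) a : A a -> (forall a, A a -> 0 <= a) ->
  (exists M, forall a, A a -> a <= M) -> a <= supK A.
Proof. by move=> Aa A0 AM; have [ub _] := supKP (ex_intro _ a Aa) A0 AM; exact: ub. Qed.

Lemma supK_le (A : set K) M : (exists a, A a) -> (forall a, A a -> 0 <= a) ->
  (forall a, A a -> a <= M) -> supK A <= M.
Proof. by move=> An A0 AM; have [_ lb] := supKP An A0 (ex_intro _ M AM); exact: lb. Qed.

End SupK.

Section Extensionality.
Variables (K : numFieldType) (V : lmodType K) (D : set V) (N : V -> K).

Lemma fnorm_ext (phi psi : V -> K) : (forall v, D v -> phi v = psi v) ->
  fnorm D N phi = fnorm D N psi.
Proof.
move=> e; rewrite /fnorm; congr supK; apply/seteqP; split => _ [v [Dv Nv] <-];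
  by exists v => //; rewrite e.
Qed.

Lemma opnorm_ext (T T' : V -> V) : (forall v, D v -> T v = T' v) ->
  opnorm D N T = opnorm D N T'.
Proof.
move=> e; rewrite /opnorm; congr supK; apply/seteqP; split => _ [v [Dv Nv] <-];
  by exists v => //; rewrite e.
Qed.

Lemma numrad_ext (T T' : V -> V) : (forall v, D v -> T v = T' v) ->
  numrad D N T = numrad D N T'.
Proof.
move=> e; rewrite /numrad; congr supK; apply/seteqP; split => _ [p Pp <-];
  by exists p => //; rewrite e //; case: Pp.
Qed.

End Extensionality.

Section NormedSpace.
Variables (K : numFieldType) (X : normedModType K).
Hypothesis supKP : supK_correct K.
Local Notation NX := (fun x : X => `|x|).
Local Notation bdf := (bd_functional (V := X) setT NX).
Local Notation bdo := (bd_operator (V := X) setT NX).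

Lemma bdf_lin (f : X -> K) : bdf f -> forall a u v, f (a *: u + v) = a * f u + f v.
Proof. by case=> lin _ a u v; apply: lin. Qed.

Lemma bdf0 (f : X -> K) : bdf f -> f 0 = 0.
Proof.
move=> /bdf_lin lin; have := lin 1 0 0; rewrite scale1r addr0 mul1r => h.
by apply: (addrI (f 0)); rewrite addr0 -h.
Qed.

Lemma bdfZ (f : X -> K) : bdf f -> forall a u, f (a *: u) = a * f u.
Proof. by move=> hf a u; have := bdf_lin hf a u 0; rewrite addr0 bdf0 // addr0. Qed.

Lemma bdfB (f : X -> K) : bdf f -> forall u v, f (u - v) = f u - f v.
Proof.
move=> hf u v; have := bdf_lin hf (-1) v u.
by rewrite scaleN1r mulN1r addrC => ->; rewrite addrC.
Qed.

Lemma bdoZ (T : X -> X) : bdo T -> forall a u, T (a *: u) = a *: T u.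
Proof.
move=> [_ [lin _]] a u.
have T0 : T 0 = 0.
  have := lin 1 0 0 I I; rewrite scale1r addr0 scale1r => h.
  by apply: (addrI (T 0)); rewrite addr0 -h.
by have := lin a u 0 I I; rewrite addr0 T0 addr0.
Qed.

Definition ball_sup (g : X -> K) := supK [set g v | v in unit_ball setT NX].

Lemma ball_supP (g : X -> K) : (forall v, 0 <= g v) ->
  (forall a v, g (a *: v) = `|a| * g v) ->
  (exists C, forall v, g v <= C * `|v|) ->
  0 <= ball_sup g /\ forall v, g v <= ball_sup g * `|v|.
Proof.
move=> g0 gZ [C hC].
pose A := [set g v | v in unit_ball setT NX].
have A0 a : A a -> 0 <= a by case=> v _ <-.
have AM : exists M, forall a, A a -> a <= M.
  exists `|C| => _ [v [_ v1] <-].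
  apply: le_trans (hC v) _.
  have h : 0 <= C * `|v| by apply: le_trans (g0 v) (hC v).
  by rewrite -(ger0_norm h) normrM normr_id; apply: ler_piMr.
have Ag0 : A (g 0) by exists 0 => //; split => //; rewrite normr0.
split; first exact: le_trans (A0 _ Ag0) (supK_ub supKP Ag0 A0 AM).
move=> v; have [->|v0] := eqVneq v 0.
  have := gZ 0 0; rewrite scale0r normr0 mul0r => ->; by rewrite normr0 mulr0.
have vp : 0 < `|v| by rewrite normr_gt0.
have hu : A (g (`|v|^-1 *: v)).
  exists (`|v|^-1 *: v) => //; split => //.
  by rewrite normrZ normfV normr_id mulVf // gt_eqF.
have := supK_ub supKP hu A0 AM; rewrite gZ normfV normr_id.
by rewrite ler_pdivrMl // mulrC.
Qed.

Lemma ball_sup_le (g : X -> K) M : (forall v, 0 <= g v) ->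
  (forall v, `|v| <= 1 -> g v <= M) -> ball_sup g <= M.
Proof.
move=> g0 hM; apply: (supK_le supKP).
- by exists (g 0); exists 0 => //; split => //; rewrite normr0.
- by move=> _ [v _ <-].
- by move=> _ [v [_ v1] <-]; exact: hM.
Qed.

Lemma fnormP (f : X -> K) : bdf f ->
  0 <= fnorm setT NX f /\ forall v, `|f v| <= fnorm setT NX f * `|v|.
Proof.
move=> hf; apply: (ball_supP (g := fun v => `|f v|)) => //.
- by move=> a v; rewrite bdfZ // normrM.
- by case: hf => _ [C h]; exists C => v; exact: (h v I).
Qed.

Lemma fnorm_le (f : X -> K) M : (forall v, `|v| <= 1 -> `|f v| <= M) ->
  fnorm setT NX f <= M.
Proof. by move=> h; apply: (ball_sup_le (g := fun v => `|f v|)). Qed.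

Lemma opnormP (T : X -> X) : bdo T ->
  0 <= opnorm setT NX T /\ forall v, `|T v| <= opnorm setT NX T * `|v|.
Proof.
move=> hT; apply: (ball_supP (g := fun v => `|T v|)) => //.
- by move=> a v; rewrite bdoZ // normrZ.
- by case: hT => _ [_ [C hC]]; exists C => v; exact: (hC v I).
Qed.

Lemma opnorm_le (T : X -> X) M : (forall v, `|v| <= 1 -> `|T v| <= M) ->
  opnorm setT NX T <= M.
Proof. by move=> h; apply: (ball_sup_le (g := fun v => `|T v|)). Qed.

Lemma bdoB (S T : X -> X) : bdo S -> bdo T -> bdo (fun v => S v - T v).
Proof.
have absC (C : K) v (w : X) : `|w| <= C * `|v| -> `|w| <= `|C| * `|v|.
  move=> h; have h0 : 0 <= C * `|v| by apply: le_trans (normr_ge0 _) h.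
  by apply: le_trans h _; rewrite -(ger0_norm h0) normrM normr_id.
move=> [_ [linS [C1 h1]]] [_ [linT [C2 h2]]]; split => //; split.
  move=> a u v _ _; rewrite linS // linT // scalerBr.
  by rewrite opprD addrACA.
exists (`|C1| + `|C2|) => v _.
apply: le_trans (ler_normB _ _) _; rewrite mulrDl.
by apply: lerD; apply: absC; [exact: h1 | exact: h2].
Qed.

End NormedSpace.

(** X has norming functionals: every x is normed by a functional of norm at
    most one.  This is the consequence of Hahn-Banach used below. *)
Definition norming_dual (K : numFieldType) (X : normedModType K) : Prop :=
  forall x : X, exists g : X -> K^o, dual_set g /\ dual_norm g <= 1 /\ g x = `|x|.

Section Adjoint.
Variables (K : numFieldType) (X : normedModType K).
Hypothesis supKP : supK_correct K.
Hypothesis normingX : norming_dual X.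
Local Notation NX := (fun x : X => `|x|).
Local Notation bdo := (bd_operator (V := X) setT NX).
Local Notation Xd := (X -> K^o).
Local Notation Dd := (@dual_set K X).
Local Notation Nd := (@dual_norm K X).

Definition adj (T : X -> X) : Xd -> Xd := fun g x => g (T x).
Definition ev (x : X) : Xd -> K := fun g => g x.

Lemma dual_normP (g : Xd) : Dd g -> 0 <= Nd g /\ forall v, `|g v| <= Nd g * `|v|.
Proof. exact: fnormP. Qed.

Lemma dual_separates (y z : X) : (forall g, Dd g -> g y = g z) -> y = z.
Proof.
move=> h; have [g [Dg [_ gyz]]] := normingX (y - z).
apply/eqP; rewrite -subr_eq0 -normr_eq0 -gyz.
by rewrite (bdfB Dg) h // subrr.
Qed.

Lemma dual_set0 : Dd 0.
Proof.
split; first by move=> a u v _ _ /=; rewrite mulr0 addr0.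
by exists 0 => v _; rewrite mul0r /= normr0.
Qed.

Lemma dual_norm0 : Nd 0 = 0.
Proof.
rewrite /dual_norm /fnorm; apply: supK_max.
  by exists 0; [split => //; rewrite normr0 | rewrite /= normr0].
by move=> _ [v _ <-]; rewrite /= normr0.
Qed.

Lemma ev_bd (x : X) : bd_functional Dd Nd (ev x).
Proof.
split; first by move=> a u v _ _.
exists `|x| => g Dg; rewrite mulrC; exact: (dual_normP Dg).2.
Qed.

Lemma fnorm_ev (x : X) : fnorm Dd Nd (ev x) = `|x|.
Proof.
rewrite /fnorm; apply: supK_max.
  have [g [Dg [g1 gx]]] := normingX x.
  by exists g; [split | rewrite /ev gx normr_id].
move=> _ [g [Dg g1] <-]; rewrite /ev.
apply: le_trans ((dual_normP Dg).2 x) _.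
by apply: ler_piMl => //; exact: normr_ge0.
Qed.

Lemma Pi_ev (x : X) (f : Xd) : Pi setT NX (x, f) -> Pi Dd Nd (f, ev x).
Proof.
move=> [_ [x1 [bf [f1 fx]]]]; split => //; split => //; split; first exact: ev_bd.
by split => //; rewrite fnorm_ev.
Qed.

Lemma Pi_dual_ev (p : Xd * (Xd -> K)) : reflexive_space X -> Pi Dd Nd p ->
  exists x, Pi setT NX (x, p.1) /\ forall g, Dd g -> p.2 g = g x.
Proof.
move=> refl [D1 [N1 [bd2 [f2 p21]]]].
have [x hx] := refl _ bd2.
exists x; split => //; split => //; split.
  by rewrite -fnorm_ev -f2; apply: fnorm_ext => g Dg; rewrite hx.
by split => //; split => //; rewrite -hx.
Qed.

Lemma adj_dual_set (T : X -> X) (g : Xd) : bdo T -> Dd g -> Dd (adj T g).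
Proof.
move=> hT Dg; split.
  move=> a u v _ _; rewrite /adj.
  by case: hT => _ [lin _]; rewrite lin //; exact: (bdf_lin Dg).
have [_ hT'] := opnormP supKP hT.
exists (Nd g * opnorm setT NX T) => v _; rewrite /adj.
apply: le_trans ((dual_normP Dg).2 _) _; rewrite -mulrA.
by apply: ler_wpM2l; [exact: (dual_normP Dg).1 | exact: hT'].
Qed.

Lemma adj_dual_norm (T : X -> X) (g : Xd) : bdo T -> Dd g ->
  Nd (adj T g) <= opnorm setT NX T * Nd g.
Proof.
move=> hT Dg; rewrite /dual_norm; apply: fnorm_le => // v v1; rewrite /adj.
apply: le_trans ((dual_normP Dg).2 _) _.
have [hop0 hT'] := opnormP supKP hT.
rewrite mulrC; apply: ler_wpM2r; first exact: (dual_normP Dg).1.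
by apply: le_trans (hT' v) _; exact: ler_piMr.
Qed.

Lemma adj_bd (T : X -> X) : bdo T -> bd_operator Dd Nd (adj T).
Proof.
move=> hT; split; first by move=> g; exact: adj_dual_set.
split; first by move=> a u v _ _.
by exists (opnorm setT NX T) => g Dg; exact: adj_dual_norm.
Qed.

Lemma adjB (S T : X -> X) (g : Xd) : Dd g ->
  adj S g - adj T g = adj (fun v => S v - T v) g.
Proof. by move=> Dg; apply/funext => x; rewrite /adj /= (bdfB Dg). Qed.

Lemma opnorm_adj_le (T : X -> X) : bdo T ->
  opnorm Dd Nd (adj T) <= opnorm setT NX T.
Proof.
move=> hT; rewrite /opnorm; apply: (supK_le supKP).
- by exists (Nd (adj T 0)); exists 0 => //; split; [exact: dual_set0 | rewrite dual_norm0 ler01].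
- by move=> _ [g [Dg _] <-]; apply: (dual_normP _).1; exact: adj_dual_set.
- move=> _ [g [Dg g1] <-]; apply: le_trans (adj_dual_norm hT Dg) _.
  by apply: ler_piMr => //; exact: (opnormP supKP hT).1.
Qed.

(** ||T|| <= ||T^*||: test |T v| against a functional norming T v *)
Lemma opnorm_adj_ge (T : X -> X) : bdo T ->
  opnorm setT NX T <= opnorm Dd Nd (adj T).
Proof.
move=> hT; apply: opnorm_le => // v v1.
have [g [Dg [g1 gx]]] := normingX (T v).
have DTg := adj_dual_set hT Dg.
pose A := [set Nd (adj T h) | h in unit_ball Dd Nd].
have A0 a : A a -> 0 <= a.
  by case=> h [Dh _] <-; apply: (dual_normP _).1; exact: adj_dual_set.
have AM : exists M, forall a, A a -> a <= M.
  exists (opnorm setT NX T) => _ [h [Dh h1] <-]; apply: le_trans (adj_dual_norm hT Dh) _.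
  by apply: ler_piMr => //; exact: (opnormP supKP hT).1.
have le_adj : Nd (adj T g) <= opnorm Dd Nd (adj T).
  by apply: (supK_ub supKP) A0 AM; exists g.
rewrite -[X in X <= _]normr_id -gx; apply: le_trans le_adj.
apply: le_trans ((dual_normP DTg).2 v) _.
by apply: ler_piMr => //; exact: (dual_normP DTg).1.
Qed.

Hypothesis reflX : reflexive_space X.

Lemma numrad_adj (T : X -> X) (U : Xd -> Xd) : bdo T ->
  (forall g, Dd g -> U g = adj T g) -> numrad Dd Nd U = numrad setT NX T.
Proof.
move=> hT e; rewrite (@numrad_ext _ _ Dd Nd _ _ e) /numrad; congr supK.
apply/seteqP; split => _ [p Pp <-].
  have [x [Px hx]] := Pi_dual_ev reflX Pp.
  exists (x, p.1) => //=; rewrite hx //; apply: adj_dual_set => //; by case: Pp.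
by exists (p.2, ev p.1); [apply: Pi_ev; case: p Pp | ].
Qed.

(** a functional on X given pointwise by reflexivity: the preadjoint of a
    bounded operator U on X^* at the point x *)
Lemma preadj_point (U : Xd -> Xd) (C : K) : (forall g, Dd g -> Dd (U g)) ->
  (forall a u v, Dd u -> Dd v -> U (a *: u + v) = a *: U u + U v) ->
  (forall g, Dd g -> Nd (U g) <= C * Nd g) ->
  forall x, exists y : X, forall g, Dd g -> U g x = g y.
Proof.
move=> DU linU hC x; apply: reflX; split.
  by move=> a u v Du Dv; rewrite linU.
exists (C * `|x|) => g Dg.
apply: le_trans ((dual_normP (DU _ Dg)).2 x) _.
by rewrite mulrAC; apply: ler_wpM2r => //; exact: hC.
Qed.

Lemma preadj (U : Xd -> Xd) : bd_operator Dd Nd U ->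
  exists T, bdo T /\ forall g, Dd g -> U g = adj T g.
Proof.
move=> [DU [linU [C hC]]].
have absC g : Dd g -> Nd (U g) <= `|C| * Nd g.
  move=> Dg; have h := hC g Dg.
  have h0 : 0 <= C * Nd g by apply: le_trans ((dual_normP (DU _ Dg)).1) h.
  by apply: le_trans h _; rewrite -(ger0_norm h0) normrM (ger0_norm (dual_normP Dg).1).
pose T x := xget 0 [set y : X | forall g, Dd g -> U g x = g y].
have hT x g : Dd g -> U g x = g (T x).
  by move=> Dg; apply: (xgetPex 0 (preadj_point DU linU absC x)).
exists T; split; last by move=> g Dg; apply/funext => x; rewrite /adj hT.
split => //; split.
  move=> a u v _ _; apply: dual_separates => g Dg.
  by rewrite -hT // (bdf_lin (DU _ Dg)) !hT // (bdf_lin Dg).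
exists `|C| => x _.
have [g [Dg [g1 gx]]] := normingX (T x).
rewrite -normr_id -gx -hT //.
apply: le_trans ((dual_normP (DU _ Dg)).2 x) _.
by apply: ler_wpM2r => //; apply: le_trans (absC _ Dg) _; apply: ler_piMr.
Qed.

(** X has the L_{p,p}-nu => X^* has it: pull U back to a preadjoint T *)
Lemma Lpp_nu_dual_of_space : has_Lpp_nu X -> dual_has_Lpp_nu X.
Proof.
move=> hX eps eps0 p Pp.
have [x [Px hx]] := Pi_dual_ev reflX Pp.
have [eta eta0 heta] := hX eps eps0 _ Px.
exists eta => // U bU nU hU.
have [T [bT eT]] := preadj bU.
have nT : numrad setT NX T = 1 by rewrite -(numrad_adj bT eT).
have D1 : Dd p.1 by case: Pp.
have hT : 1 - eta < `|p.1 (T x)|.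
  by move: hU; rewrite hx; [rewrite eT | exact: bU.1].
have [S [bS nS hS dS]] := heta T bT nT hT.
exists (adj S); split.
- exact: adj_bd.
- by rewrite (@numrad_adj S (adj S) bS).
- by rewrite hx //; apply: adj_dual_set.
- rewrite (@opnorm_ext _ _ Dd Nd _ (adj (fun v => S v - T v))); last first.
    by move=> g Dg; rewrite eT // adjB.
  by apply: le_lt_trans dS; apply: opnorm_adj_le; exact: bdoB.
Qed.

(** X^* has the L_{p,p}-nu => X has it: push T forward to T^* *)
Lemma Lpp_nu_space_of_dual : dual_has_Lpp_nu X -> has_Lpp_nu X.
Proof.
move=> hd eps eps0 [x f] Pq.
have [eta eta0 heta] := hd eps eps0 _ (Pi_ev Pq).
exists eta => // T bT nT hT.
have nT' : numrad Dd Nd (adj T) = 1 by rewrite (@numrad_adj T (adj T) bT).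
have [S' [bS' nS' hS' dS']] := heta _ (adj_bd bT) nT' hT.
have [S [bS eS]] := preadj bS'.
have Df : Dd f by case: Pq => _ [_ [? _]].
exists S; split => //.
- by rewrite -(numrad_adj bS eS).
- by move: hS'; rewrite /= eS.
- apply: le_lt_trans (opnorm_adj_ge (bdoB bS bT)) _.
  rewrite (@opnorm_ext _ _ Dd Nd _ (fun g => S' g - adj T g)) //.
  by move=> g Dg; rewrite eS // adjB.
Qed.

Lemma Lpp_nu_dual_equiv : has_Lpp_nu X <-> dual_has_Lpp_nu X.
Proof. by split; [exact: Lpp_nu_dual_of_space | exact: Lpp_nu_space_of_dual]. Qed.

End Adjoint.

(** A partial linear functional below the seminorm [p]
    extending [x0 |-> p x0] is encoded by its graph; Zorn's lemma gives a
    maximal such graph, and a maximal graph is total because any graph can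
    be extended by one more direction. *)
Section RealHahnBanach.
Variables (R : realType) (V : lmodType R) (p : V -> R).
Hypothesis pD : forall u v, p (u + v) <= p u + p v.
Hypothesis pZ : forall (a : R) v, p (a *: v) = `|a| * p v.
Variable x0 : V.

Lemma p0 : p 0 = 0.
Proof. by have := pZ 0 0; rewrite scale0r normr0 mul0r. Qed.

Lemma p_ge0 v : 0 <= p v.
Proof.
have pN : p (- v) = p v by rewrite -scaleN1r pZ normrN1 mul1r.
have := pD v (- v); rewrite subrr p0 pN -mulr2n => h.
by rewrite -(pmulrn_lge0 _ (isT : (0 < 2)%N)).
Qed.

Definition dominated_graph (G : set (V * R)) : Prop :=
  [/\ (forall v r s, G (v, r) -> G (v, s) -> r = s),
      (forall a v r w s, G (v, r) -> G (w, s) -> G (a *: v + w, a * r + s)),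
      (forall v r, G (v, r) -> r <= p v) & G (x0, p x0)].

Section Graph.
Variables (G : set (V * R)) (gG : dominated_graph G).

Lemma dgraph0 : G (0, 0).
Proof.
case: gG => _ cl _ Gx; have := cl (-1) _ _ _ _ Gx Gx.
by rewrite scaleN1r mulN1r !addNr.
Qed.

Lemma dgraphZ a v r : G (v, r) -> G (a *: v, a * r).
Proof.
move=> Gv; have := (let: And4 _ cl _ _ := gG in cl) a _ _ _ _ Gv dgraph0.
by rewrite !addr0.
Qed.

Lemma dgraphB v r w s : G (v, r) -> G (w, s) -> G (v - w, r - s).
Proof.
move=> Gv Gw; have := (let: And4 _ cl _ _ := gG in cl) (-1) _ _ _ _ Gw Gv.
by rewrite scaleN1r mulN1r addrC [- s + r]addrC.
Qed.

(** the admissible values c for a new direction y: the classical inequality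
    r - p (v - y) <= p (w + y) - s, with a supremum in between *)
Lemma dgraph_gap (y : V) : exists c : R, forall v r, G (v, r) ->
  r - p (v - y) <= c /\ c <= p (v + y) - r.
Proof.
have [_ clG domG _] := gG.
have key v r w s : G (v, r) -> G (w, s) -> r - p (v - y) <= p (w + y) - s.
  move=> Gv Gw; have := domG _ _ (clG 1 _ _ _ _ Gv Gw); rewrite scale1r mul1r => h.
  rewrite lerBrDr addrAC lerBlDr [p (w + y) + _]addrC; apply: le_trans h _.
  by have := pD (v - y) (w + y); rewrite addrACA addNr addr0.
pose L := [set z.2 - p (z.1 - y) | z in G].
have Ln : L !=set0 by exists (0 - p (0 - y)); exists (0, 0); first exact: dgraph0.
have hL : has_sup L.
  by split => //; exists (p (0 + y) - 0) => _ [[v r] Gv <-]; exact: key Gv dgraph0.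
exists (sup L) => v r Gv; split.
  by apply: sup_upper_bound => //; exists (v, r).
by apply: ge_sup => // _ [[w s] Gw <-]; exact: key Gw Gv.
Qed.

Definition adjoin (y : V) (c : R) : set (V * R) :=
  [set z | exists v r (t : R), G (v, r) /\ z = (v + t *: y, r + t * c)].

Variables (y : V) (c : R).
Hypothesis y_new : forall r, ~ G (y, r).
Hypothesis c_gap : forall v r, G (v, r) -> r - p (v - y) <= c /\ c <= p (v + y) - r.

Lemma adjoin_functional v r s : adjoin y c (v, r) -> adjoin y c (v, s) -> r = s.
Proof.
have [fnG _ _ _] := gG.
move=> [v1 [r1 [t [Gv1 [-> ->]]]]] [v2 [r2 [t' [Gv2 [e ->]]]]].
have [tt|tt] := eqVneq t t'.
  by move: e; rewrite -tt => /addIr ev; rewrite ev in Gv1; rewrite (fnG _ _ _ Gv1 Gv2).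
suff : G (y, (t - t')^-1 * (r2 - r1)) by move/y_new.
have e' : (t - t') *: y = v2 - v1.
  by rewrite scalerBl; apply/eqP; rewrite subr_eq addrAC -e addrAC subrr add0r.
have tn : t - t' != 0 by rewrite subr_eq0.
have -> : y = (t - t')^-1 *: (v2 - v1) by rewrite -e' scalerK.
by apply: dgraphZ; apply: dgraphB.
Qed.

(** domination on the new direction: divide by |t| and use the gap *)
Lemma adjoin_dominated v r : adjoin y c (v, r) -> r <= p v.
Proof.
have [_ _ domG _] := gG.
move=> [w [s [t [Gw [-> ->]]]]].
have [->|tn0] := eqVneq t 0; first by rewrite scale0r mul0r !addr0; exact: domG.
have [tp|tn] := ltP 0 t.
  have ew : w + t *: y = t *: (t^-1 *: w + y) by rewrite scalerDr scalerA mulfV // scale1r.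
  have es : s + t * c = t * (t^-1 * s + c) by field.
  have := (c_gap (dgraphZ t^-1 Gw)).2; rewrite ew es pZ (gtr0_norm tp) ler_pM2l //.
  lra.
pose u := - t; have up : 0 < u by rewrite oppr_gt0 lt_neqAle tn0.
have ew : w + t *: y = u *: (u^-1 *: w - y).
  by rewrite scalerBr scalerA mulfV ?gt_eqF // scale1r scaleNr opprK.
have es : s + t * c = u * (u^-1 * s - c) by rewrite /u; field.
have := (c_gap (dgraphZ u^-1 Gw)).1; rewrite ew es pZ (gtr0_norm up) ler_pM2l //.
lra.
Qed.

Lemma adjoin_dominated_graph : dominated_graph (adjoin y c).
Proof.
have [_ clG _ Gx0] := gG.
split.
- exact: adjoin_functional.
- move=> a z1 r1 z2 r2 [v [r [t [Gv [-> ->]]]]] [w [s [t' [Gw [-> ->]]]]].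
  exists (a *: v + w), (a * r + s), (a * t + t'); split; first exact: clG.
  congr pair; first by rewrite scalerDr scalerA scalerDl addrACA.
  by rewrite mulrDr mulrA mulrDl addrACA.
- exact: adjoin_dominated.
- by exists x0, (p x0), 0; split => //; rewrite scale0r mul0r !addr0.
Qed.

End Graph.

Lemma dgraph_extend (A : set (V * R)) (y : V) : dominated_graph A ->
  (forall r, ~ A (y, r)) -> exists2 B, dominated_graph B & A `<` B.
Proof.
move=> gA hy; have [c hc] := dgraph_gap gA y.
exists (adjoin A y c); first exact: adjoin_dominated_graph.
split; first by move=> [v r] Av; exists v, r, 0; split => //; rewrite scale0r mul0r !addr0.
move=> BA; apply: (hy c); apply: BA.
by exists 0, 0, 1; split; [exact: dgraph0 | rewrite scale1r mul1r !add0r].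
Qed.

(** the line through (x0, p x0) is a dominated graph, so Zorn applies to a
    nonempty family *)
Lemma dgraph_line : dominated_graph [set z | exists t : R, z = (t *: x0, t * p x0)].
Proof.
split.
- move=> v r s [t [-> ->]] [t' [e ->]].
  have [->|x0n] := eqVneq x0 0; first by rewrite p0 !mulr0.
  move/eqP: e; rewrite -subr_eq0 -scalerBl scaler_eq0 (negPf x0n) orbF subr_eq0.
  by move/eqP ->.
- move=> a v r w s [t [-> ->]] [t' [-> ->]]; exists (a * t + t').
  by rewrite scalerDl scalerA mulrDl mulrA.
- move=> v r [t [-> ->]]; rewrite pZ; apply: ler_wpM2r; first exact: p_ge0.
  exact: ler_norm.
- by exists 1; rewrite scale1r mul1r.
Qed.

(** the union of a chain of dominated graphs (or of empty sets) is again one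
    (or empty): the inductivity hypothesis of Zorn's lemma *)
Lemma dgraph_chain (F : set (set (V * R))) :
  F `<=` (fun G => G = set0 \/ dominated_graph G) -> total_on F subset ->
  (\bigcup_(G in F) G) = set0 \/ dominated_graph (\bigcup_(G in F) G).
Proof.
move=> FP tot.
have [all0|] := pselect (forall G, F G -> G = set0).
  by left; apply/seteqP; split => // z [G FG]; rewrite (all0 _ FG).
move/existsNP => [G1 /not_implyP [FG1 /eqP/set0P [z1 G1z1]]].
have good G z : F G -> G z -> dominated_graph G.
  by move=> FG Gz; case: (FP _ FG) => // G0; rewrite G0 in Gz.
have common G H : F G -> F H -> exists2 M, F M & G `<=` M /\ H `<=` M.
  by move=> FG FH; case: (tot _ _ FG FH) => sub; [exists H | exists G] => //; split.
right; split.
- move=> v r s [G FG Gr] [H FH Hs]; have [M FM [GM HM]] := common _ _ FG FH.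
  by case: (good _ _ FM (GM _ Gr)) => fn _ _ _; apply: fn (GM _ Gr) (HM _ Hs).
- move=> a v r w s [G FG Gr] [H FH Hs]; have [M FM [GM HM]] := common _ _ FG FH.
  by exists M => //; case: (good _ _ FM (GM _ Gr)) => _ cl _ _; exact: cl (GM _ Gr) (HM _ Hs).
- by move=> v r [G FG Gr]; case: (good _ _ FG Gr) => _ _ dom _; apply: dom.
- by exists G1 => //; case: (good _ _ FG1 G1z1).
Qed.

Lemma real_hahn_banach : exists f : V -> R,
  [/\ (forall a u v, f (a *: u + v) = a * f u + f v),
      (forall v, f v <= p v) & f x0 = p x0].
Proof.
have [A [PA Amax]] := Zorn_bigcup dgraph_chain.
have gA : dominated_graph A.
  case: PA => // A0; exfalso.
  apply: (Amax [set z | exists t : R, z = (t *: x0, t * p x0)]); last by right; exact: dgraph_line.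
  rewrite A0; split => // h; have := h (x0, p x0).
  by move=> /(_ (ex_intro _ 1 _)); rewrite scale1r mul1r => /(_ erefl).
have total v : exists r, A (v, r).
  apply: contrapT => nex.
  have [B gB AB] := dgraph_extend gA (fun r Ar => nex (ex_intro _ r Ar)).
  by apply: (Amax B AB); right.
have [fnA clA domA Ax0] := gA.
pose f v := xget 0 [set r | A (v, r)].
have Af v : A (v, f v) by apply: (xgetPex 0 (total v)).
exists f; split.
- by move=> a u v; apply: fnA (Af _) (clA _ _ _ _ _ (Af u) (Af v)).
- by move=> v; apply: domA.
- exact: fnA (Af _) Ax0.
Qed.

End RealHahnBanach.

(** Complex Hahn-Banach, via the underlying real space of a complex space. *)
Section Realification.
Variables (R : realType) (X : lmodType R[i]).

Definition realify : Type := X.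
HB.instance Definition _ := GRing.Zmodule.on realify.

Definition rscale (r : R) (v : realify) : realify := (r%:C%C : R[i]) *: (v : X).

Lemma rscaleA a b v : rscale a (rscale b v) = rscale (a * b) v.
Proof. by rewrite /rscale scalerA -rmorphM. Qed.
Lemma rscale1 : left_id 1 rscale.
Proof. by move=> v; rewrite /rscale rmorph1 scale1r. Qed.
Lemma rscaleDr : right_distributive rscale +%R.
Proof. by move=> a u v; rewrite /rscale scalerDr. Qed.
Lemma rscaleDl v : {morph rscale^~ v : a b / a + b}.
Proof. by move=> a b; rewrite /rscale rmorphD scalerDl. Qed.

HB.instance Definition _ := GRing.Zmodule_isLmodule.Build R realify
  rscaleA rscale1 rscaleDr rscaleDl.

(** a real-linear u : X -> R is the real part of the complex-linear
    functional v |-> u v - i u (i v) *)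
Definition complexify (u : X -> R) (v : X) : R[i] :=
  (u v)%:C%C - 'i%C * (u ('i%C *: v))%:C%C.

Variable u : realify -> R.
Hypothesis u_lin : forall (a : R) (v w : realify), u (a *: v + w) = a * u v + u w.

Lemma complexify_linear (a : R[i]) (v w : X) :
  complexify u (a *: v + w) = a * complexify u v + complexify u w.
Proof.
have uD (v1 v2 : X) : u (v1 + v2) = u v1 + u v2.
  by have := u_lin 1 v1 v2; rewrite mul1r scale1r.
have u0 : u 0 = 0.
  by have := uD 0 0; rewrite addr0 => h; apply: (addrI (u 0)); rewrite addr0 -h.
have uZ (r : R) (v1 : X) : u ((r%:C%C : R[i]) *: v1) = r * u v1.
  by have := u_lin r v1 0; rewrite !addr0 u0 addr0.
have uN (v1 : X) : u (- v1) = - u v1.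
  by have := uZ (-1) v1; rewrite rmorphN1 scaleN1r => ->; rewrite mulN1r.
have fD v1 v2 : complexify u (v1 + v2) = complexify u v1 + complexify u v2.
  by rewrite /complexify scalerDr !uD !rmorphD; ring.
have fR (r : R) v1 : complexify u ((r%:C%C : R[i]) *: v1) = r%:C%C * complexify u v1.
  rewrite /complexify (uZ r v1) scalerA [_ * r%:C%C]mulrC -scalerA (uZ r ('i%C *: v1)).
  by rewrite !rmorphM; ring.
have fI v1 : complexify u ('i%C *: v1) = 'i%C * complexify u v1.
  rewrite /complexify scalerA -expr2 sqr_i scaleN1r (uN v1) rmorphN.
  by rewrite mulrBr mulrA -expr2 sqr_i; ring.
rewrite fD; congr (_ + _).
rewrite (complexE a) scalerDl fD mulrDl fR; congr (_ + _).
by rewrite mulrC -scalerA fR fI mulrA.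
Qed.

Lemma Re_complexify v : complex.Re (complexify u v) = u v.
Proof. by rewrite /complexify /= mul0r mul1r subr0 subr0. Qed.

End Realification.

Section ComplexHahnBanach.
Variables (R : realType) (X : normedModType R[i]).

Definition re_norm (v : realify X) : R := complex.Re `|(v : X)|.

Lemma re_normD u v : re_norm (u + v) <= re_norm u + re_norm v.
Proof.
rewrite /re_norm; have := ler_normD (u : X) (v : X); rewrite lecE => /andP[_].
by case: (`|(u : X)|) => a b; case: (`|(v : X)|).
Qed.

Lemma re_normZ (a : R) v : re_norm (a *: v) = `|a| * re_norm v.
Proof.
rewrite /re_norm; change (a *: v) with ((a%:C%C : R[i]) *: (v : X)).
have normC (r : R) : `|r%:C%C| = `|r|%:C%C.
  by rewrite normc_def /= expr0n /= addr0 sqrtr_sqr.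
rewrite normrZ normC (ge0_realC (normr_ge0 (v : X))) /=.
by rewrite mulr0 subr0.
Qed.

(** a complex-linear functional whose real part is below the norm has norm
    at most one: rotate v so that f v becomes real *)
Lemma complex_functional_bound (f : X -> R[i]) :
  (forall (a : R[i]) v w, f (a *: v + w) = a * f v + f w) ->
  (forall v, complex.Re (f v) <= complex.Re `|v|) -> forall v, `|f v| <= `|v|.
Proof.
move=> flin fRe v; have [->|fv0] := eqVneq (f v) 0; first by rewrite normr0.
pose l := `|f v| / f v.
have l1 : `|l| = 1 by rewrite /l normf_div normr_id divff // normr_eq0.
have f0 : f 0 = 0.
  have := flin 1 0 0; rewrite scale1r addr0 mul1r => h.
  by apply: (addrI (f 0)); rewrite addr0 -h.
have fl : f (l *: v) = `|f v|.
  by have := flin l v 0; rewrite addr0 f0 addr0 => ->; rewrite /l mulfVK.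
have hRe : complex.Re `|f v| <= complex.Re `|v|.
  by rewrite -fl; apply: le_trans (fRe _) _; rewrite normrZ l1 mul1r.
by rewrite (ge0_realC (normr_ge0 (f v))) (ge0_realC (normr_ge0 v)) lecR.
Qed.

Lemma complex_hahn_banach (x : X) : exists f : X -> R[i],
  [/\ (forall (a : R[i]) u v, f (a *: u + v) = a * f u + f v),
      (forall v, `|f v| <= `|v|) & f x = `|x|].
Proof.
have [u [ulin udom ux]] := real_hahn_banach re_normD re_normZ (x : realify X).
pose f := complexify u.
have flin : forall (a : R[i]) v w, f (a *: v + w) = a * f v + f w.
  exact: complexify_linear.
have fb : forall v, `|f v| <= `|v|.
  by apply: complex_functional_bound flin _ => v; rewrite Re_complexify; exact: udom.
exists f; split => //.
have Rfx : complex.Re (f x) = complex.Re `|x| by rewrite Re_complexify ux.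
have h2 : `|f x| ^+ 2 <= `|x| ^+ 2.
  by apply: lerXn2r; rewrite ?nnegrE ?normr_ge0 //; exact: fb.
rewrite -add_Re2_Im2 (ge0_realC (normr_ge0 x)) -rmorphXn lecR Rfx in h2.
have Im0 : complex.Im (f x) = 0.
  by apply/eqP; rewrite -sqrf_eq0 eq_le sqr_ge0 andbT; lra.
rewrite (ge0_realC (normr_ge0 x)) -Rfx.
by case: (f x) Im0 => a b /= ->.
Qed.

End ComplexHahnBanach.

Lemma norming_functional (K : numFieldType) (X : normedModType K) (x : X)
    (f : X -> K) : supK_correct K ->
  (forall a u v, f (a *: u + v) = a * f u + f v) ->
  (forall v, `|f v| <= `|v|) -> f x = `|x| ->
  exists g : X -> K^o, dual_set g /\ dual_norm g <= 1 /\ g x = `|x|.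
Proof.
move=> supKP flin fb fx.
have Df : dual_set (f : X -> K^o).
  by split; [move=> a u v _ _; exact: flin | exists 1 => v _; rewrite mul1r; exact: fb].
exists f; split => //; split => //.
by apply: (fnorm_le supKP) => v v1; apply: le_trans (fb v) v1.
Qed.

Lemma norming_dual_real (R : realType) (X : normedModType R) : norming_dual X.
Proof.
move=> x; have [f [flin fdom fx]] := real_hahn_banach (@ler_normD _ X) (@normrZ _ X) x.
have f0 : f 0 = 0.
  by have := flin 1 0 0; rewrite scale1r addr0 mul1r => h; apply: (addrI (f 0)); rewrite addr0 -h.
have fN v : f (- v) = - f v.
  by have := flin (-1) v 0; rewrite addr0 f0 addr0 scaleN1r mulN1r.
apply: norming_functional (@supK_correct_real R) flin _ fx => v.
by rewrite ler_norml fdom andbT lerNl -fN -(normrN v) fdom.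
Qed.

Lemma norming_dual_complex (R : realType) (X : normedModType R[i]) : norming_dual X.
Proof.
move=> x; have [f [flin fb fx]] := complex_hahn_banach x.
exact: norming_functional (@supK_correct_complex R) flin fb fx.
Qed.

Theorem proposition3p12 (R : realType) :
  (forall X : completeNormedModType R,
     reflexive_space X -> (has_Lpp_nu X <-> dual_has_Lpp_nu X))
  /\
  (forall X : completeNormedModType R[i],
     reflexive_space X -> (has_Lpp_nu X <-> dual_has_Lpp_nu X)).
Proof.
split => X reflX.
- exact: (Lpp_nu_dual_equiv (@supK_correct_real R) (@norming_dual_real R X) reflX).
- exact: (Lpp_nu_dual_equiv (@supK_correct_complex R) (@norming_dual_complex R X) reflX).
Qed.
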